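(* Let $X$ be a real separable Hilbert space, $A\in\mathcal L(X)$ monotone, $x^\dagger,\bar x\in X$, $y=Ax^\dagger$, and $d(R):=\min\{\|x^\dagger-\bar x-Aw\|:\|w\|\le R\}$. Suppose there are constants $K,q>0$ and $\underline R>1$ with $$d(R)\le\frac{K}{(\log R)^q}\quad\text{for all }R\ge\underline R.$$ Then the bias $B^A_{x^\dagger}(\alpha):=\alpha\|(A+\alpha I)^{-1}(x^\dagger-\bar x)\|$ satisfies $B^A_{x^\dagger}(\alpha)=\mathcal O\big((\log\frac1\alpha)^{-q}\big)$ as $\alpha\to0$. Moreover, if $\alpha(\delta)=c\,\delta^\zeta$ with constants $c>0$ and $0<\zeta<1$, then for all $y^\delta$ with $\|y-y^\delta\|\le\delta$, $$\|x^\delta_{\alpha(\delta)}-x^\dagger\|=\mathcal O\big((\log\tfrac1\delta)^{-q}\big)\quad\text{as }\delta\to0.$$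
   Context: $A$ monotone: $\langle Ax,x\rangle\ge0$ for all $x$. $x^\delta_\alpha:=(A+\alpha I)^{-1}(y^\delta+\alpha\bar x)$ is the Lavrentiev-regularized solution. $\mathcal L(X)$: bounded linear operators on $X$. *)

From Stdlib Require Import Reals Lra ClassicalEpsilon.
Open Scope R_scope.

Record RHilbert := {
  carrier :> Type;
  hzero : carrier;
  hadd : carrier -> carrier -> carrier;
  hopp : carrier -> carrier;
  hscal : R -> carrier -> carrier;
  hinner : carrier -> carrier -> R;
  hadd_assoc : forall x y z, hadd x (hadd y z) = hadd (hadd x y) z;
  hadd_comm : forall x y, hadd x y = hadd y x;
  hadd_zero : forall x, hadd hzero x = x;
  hadd_opp : forall x, hadd x (hopp x) = hzero;
  hscal_assoc : forall a b x, hscal a (hscal b x) = hscal (a * b) x;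
  hscal_one : forall x, hscal 1 x = x;
  hscal_addr : forall a x y, hscal a (hadd x y) = hadd (hscal a x) (hscal a y);
  hscal_addl : forall a b x, hscal (a + b) x = hadd (hscal a x) (hscal b x);
  hinner_sym : forall x y, hinner x y = hinner y x;
  hinner_addl : forall x y z, hinner (hadd x y) z = hinner x z + hinner y z;
  hinner_scall : forall a x y, hinner (hscal a x) y = a * hinner x y;
  hinner_pos : forall x, 0 <= hinner x x;
  hinner_def : forall x, hinner x x = 0 -> x = hzero;
  hcomplete : forall u : nat -> carrier,
    (forall eps, 0 < eps -> exists N, forall n m, (n >= N)%nat -> (m >= N)%nat ->
        sqrt (hinner (hadd (u n) (hopp (u m))) (hadd (u n) (hopp (u m)))) < eps) ->
    exists l, forall eps, 0 < eps -> exists N, forall n, (n >= N)%nat ->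
        sqrt (hinner (hadd (u n) (hopp l)) (hadd (u n) (hopp l))) < eps;
  hseparable : exists e : nat -> carrier, forall x eps, 0 < eps ->
    exists n, sqrt (hinner (hadd x (hopp (e n))) (hadd x (hopp (e n)))) < eps
}.

Arguments hzero {_}.
Arguments hadd {_}.
Arguments hopp {_}.
Arguments hscal {_}.
Arguments hinner {_}.

Definition hsub {X : RHilbert} (x y : X) : X := hadd x (hopp y).
Definition hnorm {X : RHilbert} (x : X) : R := sqrt (hinner x x).

Definition bounded_linear {X : RHilbert} (A : X -> X) : Prop :=
  (forall x y, A (hadd x y) = hadd (A x) (A y)) /\
  (forall a x, A (hscal a x) = hscal a (A x)) /\
  (exists M, forall x, hnorm (A x) <= M * hnorm x).

Definition monotone {X : RHilbert} (A : X -> X) : Prop :=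
  forall x, 0 <= hinner (A x) x.

(** (A + alpha I)^{-1} b : the (unique, for alpha > 0 and A monotone bounded)
    solution z of A z + alpha z = b, chosen by Hilbert's epsilon. *)
Definition resolvent {X : RHilbert} (A : X -> X) (alpha : R) (b : X) : X :=
  epsilon (inhabits (@hzero X)) (fun z => hadd (A z) (hscal alpha z) = b).

Definition bias {X : RHilbert} (A : X -> X) (xdag xbar : X) (alpha : R) : R :=
  alpha * hnorm (resolvent A alpha (hsub xdag xbar)).

Definition lavrentiev {X : RHilbert} (A : X -> X) (xbar ydelta : X) (alpha : R) : X :=
  resolvent A alpha (hadd ydelta (hscal alpha xbar)).

From Stdlib Require Import Reals Lra Lia ClassicalEpsilon.
Open Scope R_scope.

Arguments hadd_assoc {_}. Arguments hadd_comm {_}. Arguments hadd_zero {_}.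
Arguments hadd_opp {_}. Arguments hscal_assoc {_}. Arguments hscal_one {_}.
Arguments hscal_addr {_}. Arguments hscal_addl {_}. Arguments hinner_sym {_}.
Arguments hinner_addl {_}. Arguments hinner_scall {_}. Arguments hinner_pos {_}.
Arguments hinner_def {_}.

(* Monotonicity makes [A + al I] coercive with constant [al]; completeness then yields its
   invertibility through a contraction, and [al * |(A + al I)^-1 b| <= |b|].  Splitting
   [xdag - xbar = (xdag - xbar - A w) + A w] gives [bias al <= d(R) + 2 al R], and the radius
   [R = al^(-1/2)] turns this into [O((ln (1/al))^-q)], since [al^(1/2)] decays faster than
   any power of [ln (1/al)].  The total error is at most [delta / al + bias al]; for
   [al = c delta^zeta] the noise term [delta^(1 - zeta) / c] is again negligible and
   [ln (1/al)] is comparable to [zeta ln (1/delta)]. *)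

Section HilbertAlgebra.
Context {X : RHilbert}.
Implicit Types u v w x y : X.

Lemma hadd0 u : hadd u hzero = u.
Proof. rewrite hadd_comm; apply hadd_zero. Qed.

Lemma hadd_cancelr u v w : hadd u w = hadd v w -> u = v.
Proof.
  intros E. rewrite <- (hadd0 u), <- (hadd0 v), <- (hadd_opp w), !hadd_assoc, E.
  reflexivity.
Qed.

Lemma hscal0 u : hscal 0 u = hzero.
Proof.
  apply (hadd_cancelr _ _ (hscal 0 u)).
  rewrite hadd_zero, <- hscal_addl, Rplus_0_l. reflexivity.
Qed.

Lemma hscalr0 r : hscal r (@hzero X) = hzero.
Proof. rewrite <- (hscal0 hzero) at 1. rewrite hscal_assoc, Rmult_0_r. apply hscal0. Qed.

Lemma hopp_scal u : hopp u = hscal (-1) u.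
Proof.
  apply (hadd_cancelr _ _ u). rewrite hadd_comm, hadd_opp.
  rewrite <- (hscal_one u) at 2. rewrite <- hscal_addl.
  replace (-1 + 1) with 0 by ring. now rewrite hscal0.
Qed.

Lemma hsubE u v : hsub u v = hadd u (hscal (-1) v).
Proof. unfold hsub; rewrite hopp_scal; reflexivity. Qed.

Lemma hsubrr u : hsub u u = hzero.
Proof. apply hadd_opp. Qed.

Lemma hsub0 u : hsub u hzero = u.
Proof. rewrite hsubE, hscalr0; apply hadd0. Qed.

Lemma hsub_eq0 u v : hsub u v = hzero -> u = v.
Proof. intros E. apply (hadd_cancelr _ _ (hopp v)). rewrite hadd_opp. exact E. Qed.

Lemma haddK u v : hsub (hadd u v) v = u.
Proof. unfold hsub. rewrite <- hadd_assoc, hadd_opp, hadd0. reflexivity. Qed.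

Lemma haddACA u v x y : hadd (hadd u v) (hadd x y) = hadd (hadd u x) (hadd v y).
Proof.
  rewrite <- !hadd_assoc. f_equal. rewrite !hadd_assoc. f_equal. apply hadd_comm.
Qed.

Lemma hsubDD u v x y : hsub (hadd u v) (hadd x y) = hadd (hsub u x) (hsub v y).
Proof. rewrite !hsubE, hscal_addr. apply haddACA. Qed.

Lemma hscal_sub r u v : hscal r (hsub u v) = hsub (hscal r u) (hscal r v).
Proof. rewrite !hsubE, hscal_addr, !hscal_assoc, Rmult_comm. reflexivity. Qed.

Lemma hscalN1_sub u v : hscal (-1) (hsub u v) = hadd (hscal (-1) u) v.
Proof.
  rewrite hsubE, hscal_addr, hscal_assoc. replace (-1 * -1) with 1 by ring.
  rewrite hscal_one. reflexivity.
Qed.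

Lemma hsubBB u v x y : hsub (hsub u x) (hsub v y) = hsub (hsub u v) (hsub x y).
Proof.
  rewrite (hsubE (hsub u x)), (hsubE (hsub u v)), !hscalN1_sub, !(hsubE u).
  apply haddACA.
Qed.

Lemma hsub_eq_self u w : hsub u w = u -> w = hzero.
Proof.
  unfold hsub. rewrite <- (hadd0 u) at 2. rewrite !(hadd_comm u). intros E.
  apply hadd_cancelr in E. rewrite <- (hscal_one w), <- (hscalr0 (-1)), <- E, hopp_scal.
  rewrite hscal_assoc. f_equal. ring.
Qed.

Lemma hscal_eq0 r u : r <> 0 -> hscal r u = hzero -> u = hzero.
Proof.
  intros Hr E. rewrite <- (hscal_one u), <- (Rinv_l r Hr), <- hscal_assoc, E.
  apply hscalr0.
Qed.

Lemma hsub_trans u v w : hsub u w = hadd (hsub u v) (hsub v w).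
Proof. rewrite <- hsubDD, (hadd_comm v w), hsubDD, hsubrr, hadd0. reflexivity. Qed.

Lemma hsubC u v : hsub u v = hscal (-1) (hsub v u).
Proof. rewrite hscalN1_sub, hsubE. apply hadd_comm. Qed.

Lemma hinner_addr u v w : hinner u (hadd v w) = hinner u v + hinner u w.
Proof. rewrite hinner_sym, hinner_addl, !(hinner_sym _ u). reflexivity. Qed.

Lemma hinner_scalr r u v : hinner u (hscal r v) = r * hinner u v.
Proof. rewrite hinner_sym, hinner_scall, hinner_sym. reflexivity. Qed.

Lemma hinner0r u : hinner u hzero = 0.
Proof. rewrite <- (hscal0 hzero), hinner_scalr. ring. Qed.

Lemma hinner_subsub u v :
  hinner (hsub u v) (hsub u v) = hinner u u - 2 * hinner u v + hinner v v.
Proof.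
  rewrite hsubE, hinner_addl, !hinner_addr, !hinner_scall, !hinner_scalr, (hinner_sym v u).
  ring.
Qed.

Lemma hinner_addadd u v :
  hinner (hadd u v) (hadd u v) = hinner u u + 2 * hinner u v + hinner v v.
Proof. rewrite hinner_addl, !hinner_addr, (hinner_sym v u). ring. Qed.

Lemma hnorm_ge0 u : 0 <= hnorm u.
Proof. apply sqrt_pos. Qed.

Lemma hnorm_sq u : hnorm u * hnorm u = hinner u u.
Proof. apply sqrt_sqrt, hinner_pos. Qed.

Lemma hnorm0 : hnorm (@hzero X) = 0.
Proof. unfold hnorm. rewrite hinner0r. apply sqrt_0. Qed.

Lemma hnorm_eq0 u : hnorm u = 0 -> u = hzero.
Proof. intros E. apply hinner_def. rewrite <- hnorm_sq, E. ring. Qed.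

Lemma hnorm_scal r u : hnorm (hscal r u) = Rabs r * hnorm u.
Proof.
  unfold hnorm. rewrite hinner_scall, hinner_scalr, <- Rmult_assoc.
  rewrite sqrt_mult_alt by apply Rle_0_sqr. fold (Rsqr r). rewrite sqrt_Rsqr_abs.
  reflexivity.
Qed.

Lemma hinner_sq_le u v : hinner u v * hinner u v <= hinner u u * hinner v v.
Proof.
  pose proof (hinner_pos v) as Hv.
  destruct (Req_dec (hinner v v) 0) as [E|E].
  - apply hinner_def in E. subst v. rewrite !hinner0r. lra.
  - set (t := hinner u v / hinner v v).
    pose proof (hinner_pos (hsub u (hscal t v))) as H.
    rewrite hinner_subsub, hinner_scalr, hinner_scall, hinner_scalr in H.
    assert (Gap : hinner u u * hinner v v - hinner u v * hinner u v =
      hinner v v * (hinner u u - 2 * (t * hinner u v) + t * (t * hinner v v)))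
      by (unfold t; field; lra).
    assert (0 <= hinner v v * (hinner u u - 2 * (t * hinner u v) + t * (t * hinner v v)))
      by (apply Rmult_le_pos; lra).
    lra.
Qed.

Lemma hinner_le u v : hinner u v <= hnorm u * hnorm v.
Proof.
  pose proof (hnorm_ge0 u). pose proof (hnorm_ge0 v).
  apply Rsqr_incr_0_var; [|nra]. unfold Rsqr.
  replace (hnorm u * hnorm v * (hnorm u * hnorm v)) with (hinner u u * hinner v v)
    by (rewrite <- !hnorm_sq; ring).
  apply hinner_sq_le.
Qed.

Lemma hnorm_add_le u v : hnorm (hadd u v) <= hnorm u + hnorm v.
Proof.
  pose proof (hinner_le u v). pose proof (hnorm_ge0 u). pose proof (hnorm_ge0 v).
  unfold hnorm at 1. rewrite hinner_addadd, <- !hnorm_sq.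
  rewrite <- (sqrt_square (hnorm u + hnorm v)) by lra.
  apply sqrt_le_1_alt. nra.
Qed.

Lemma hnorm_sub_trans u v w : hnorm (hsub u w) <= hnorm (hsub u v) + hnorm (hsub v w).
Proof. rewrite (hsub_trans u v w). apply hnorm_add_le. Qed.

Lemma hnorm_subC u v : hnorm (hsub u v) = hnorm (hsub v u).
Proof. rewrite hsubC, hnorm_scal, Rabs_left by lra. ring. Qed.

Lemma hnorm_sub_le u v : hnorm (hsub u v) <= hnorm u + hnorm v.
Proof.
  rewrite hsubE. eapply Rle_trans; [apply hnorm_add_le|].
  rewrite hnorm_scal, Rabs_left by lra. lra.
Qed.

Lemma hnorm_le_sub u v : hnorm u <= hnorm (hsub u v) + hnorm v.
Proof. rewrite <- (hsub0 u) at 1. rewrite <- (hsub0 v) at 2. apply hnorm_sub_trans. Qed.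

End HilbertAlgebra.

Section Contraction.
Context {X : RHilbert} (T : X -> X) (k : R).
Hypothesis k_range : 0 <= k < 1.
Hypothesis T_contraction : forall u v, hnorm (hsub (T u) (T v)) <= k * hnorm (hsub u v).

Let picard (n : nat) : X := Nat.iter n T hzero.
Let D : R := hnorm (hsub (picard 1) (picard 0)).

Lemma picard_dist_start j : hnorm (hsub (picard j) (picard 0)) <= D / (1 - k).
Proof.
  assert (D0 : 0 <= D) by apply hnorm_ge0.
  induction j as [|j IH].
  - rewrite hsubrr, hnorm0. apply Rmult_le_pos; [lra|]. apply Rlt_le, Rinv_0_lt_compat; lra.
  - apply Rle_trans with (k * (D / (1 - k)) + D); [|right; field; lra].
    eapply Rle_trans; [apply (hnorm_sub_trans _ (picard 1))|].
    pose proof (T_contraction (picard j) (picard 0)).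
    pose proof (Rmult_le_compat_l k _ _ (proj1 k_range) IH).
    fold D. unfold picard in *. simpl in *. lra.
Qed.

Lemma picard_dist n j : hnorm (hsub (picard (n + j)) (picard n)) <= k ^ n * (D / (1 - k)).
Proof.
  induction n as [|n IH].
  - rewrite Rmult_1_l. apply picard_dist_start.
  - eapply Rle_trans; [apply T_contraction|].
    simpl (k ^ S n). rewrite Rmult_assoc. apply Rmult_le_compat_l; [lra|]. exact IH.
Qed.

Lemma picard_cauchy eps : 0 < eps -> exists N, forall n m, (n >= N)%nat -> (m >= N)%nat ->
  hnorm (hsub (picard n) (picard m)) < eps.
Proof.
  intros Heps. assert (D0 : 0 <= D) by apply hnorm_ge0.
  destruct (pow_lt_1_zero k ltac:(rewrite Rabs_pos_eq; lra) (eps * (1 - k) / (D + 1)))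
    as [N HN].
  { apply Rdiv_lt_0_compat; [apply Rmult_lt_0_compat|]; lra. }
  exists N.
  assert (Ordered : forall n m, (N <= n <= m)%nat -> hnorm (hsub (picard m) (picard n)) < eps).
  { intros n m Hnm. replace m with (n + (m - n))%nat by lia.
    eapply Rle_lt_trans; [apply picard_dist|].
    specialize (HN n (proj1 Hnm)). rewrite Rabs_pos_eq in HN by (apply pow_le; lra).
    assert (Hr : 0 <= D / (1 - k))
      by (apply Rmult_le_pos; [lra|apply Rlt_le, Rinv_0_lt_compat; lra]).
    assert (0 < eps / (D + 1)) by (apply Rdiv_lt_0_compat; lra).
    assert (eps * (1 - k) / (D + 1) * (D / (1 - k)) = eps - eps / (D + 1)) by (field; lra).
    pose proof (Rmult_le_compat_r (D / (1 - k)) _ _ Hr (Rlt_le _ _ HN)). lra. }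
  intros n m Hn Hm. destruct (Nat.le_ge_cases n m).
  - rewrite hnorm_subC. apply Ordered. lia.
  - apply Ordered. lia.
Qed.

Lemma contraction_fixpoint : exists l, T l = l.
Proof.
  destruct (hcomplete X picard picard_cauchy) as [l Hl].
  exists l. apply hsub_eq0, hnorm_eq0, Rle_antisym; [|apply hnorm_ge0].
  apply le_epsilon. intros eps Heps. rewrite Rplus_0_l.
  destruct (Hl (eps / 2) ltac:(lra)) as [N HN].
  assert (Near : forall n, (n >= N)%nat -> hnorm (hsub (picard n) l) < eps / 2) by exact HN.
  pose proof (Near (S N) (le_S _ _ (le_n N))).
  pose proof (T_contraction l (picard N)) as Step. rewrite (hnorm_subC l) in Step.
  assert (k * hnorm (hsub (picard N) l) <= eps / 2).
  { pose proof (Near N (le_n N)). pose proof (hnorm_ge0 (hsub (picard N) l)).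
    apply Rle_trans with (1 * (eps / 2)); [apply Rmult_le_compat|]; lra. }
  eapply Rle_trans; [apply (hnorm_sub_trans _ (picard (S N)))|].
  change (picard (S N)) with (T (picard N)) at 1. lra.
Qed.

End Contraction.

Lemma Rdiv_in_unit a N : 0 < a <= N -> 0 < a / N <= 1.
Proof.
  intros H. split; [apply Rdiv_lt_0_compat; lra|].
  apply Rmult_le_reg_r with N; [lra|]. unfold Rdiv. rewrite Rmult_assoc, Rinv_l by lra. lra.
Qed.

Section ShiftedOperator.
Context {X : RHilbert} (A : X -> X).
Hypothesis A_lin : bounded_linear A.
Hypothesis A_mon : monotone A.
Implicit Types u v w x y z b : X.

Definition shifted (al : R) z : X := hadd (A z) (hscal al z).

Lemma A_add u v : A (hadd u v) = hadd (A u) (A v).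
Proof. apply (proj1 A_lin). Qed.

Lemma A_scal r u : A (hscal r u) = hscal r (A u).
Proof. apply (proj1 (proj2 A_lin)). Qed.

Lemma A_sub u v : A (hsub u v) = hsub (A u) (A v).
Proof. rewrite !hsubE, A_add, A_scal. reflexivity. Qed.

Lemma shifted_add al u v : shifted al (hadd u v) = hadd (shifted al u) (shifted al v).
Proof. unfold shifted. rewrite A_add, hscal_addr. apply haddACA. Qed.

Lemma shifted_sub al u v : shifted al (hsub u v) = hsub (shifted al u) (shifted al v).
Proof. unfold shifted. rewrite A_sub, hscal_sub. symmetry. apply hsubDD. Qed.

Lemma shifted_scal al r u : shifted al (hscal r u) = hscal r (shifted al u).
Proof. unfold shifted. rewrite A_scal, hscal_addr, !hscal_assoc, Rmult_comm. reflexivity. Qed.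

Lemma shifted_A al u : shifted al (A u) = A (shifted al u).
Proof. unfold shifted. rewrite A_add, A_scal. reflexivity. Qed.

Lemma shifted_inner_ge al z : al * (hnorm z * hnorm z) <= hinner (shifted al z) z.
Proof.
  unfold shifted. rewrite hinner_addl, hinner_scall, hnorm_sq.
  pose proof (A_mon z). lra.
Qed.

Lemma shifted_coercive al z : 0 < al -> al * hnorm z <= hnorm (shifted al z).
Proof.
  intros Hal. pose proof (shifted_inner_ge al z). pose proof (hinner_le (shifted al z) z).
  pose proof (hnorm_ge0 z). pose proof (hnorm_ge0 (shifted al z)).
  destruct (Req_dec (hnorm z) 0) as [E|E].
  - rewrite E, Rmult_0_r. assumption.
  - apply Rmult_le_reg_r with (hnorm z); nra.
Qed.

Lemma shifted_bounded al : 0 < al ->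
  exists N, al <= N /\ forall z, hnorm (shifted al z) <= N * hnorm z.
Proof.
  intros Hal. destruct A_lin as (_ & _ & M & HM).
  exists (Rabs M + al). split; [pose proof (Rabs_pos M); lra|]. intros z.
  unfold shifted. eapply Rle_trans; [apply hnorm_add_le|].
  rewrite hnorm_scal, Rabs_pos_eq by lra.
  pose proof (HM z).
  pose proof (Rmult_le_compat_r (hnorm z) _ _ (hnorm_ge0 z) (Rle_abs M)). lra.
Qed.

Lemma shifted_damped_step al N v : 0 < al <= N ->
  (forall z, hnorm (shifted al z) <= N * hnorm z) ->
  hnorm (hsub v (hscal (al / (N * N)) (shifted al v))) <= sqrt (1 - (al / N) ^ 2) * hnorm v.
Proof.
  intros Hal HN. set (t := al / (N * N)).
  assert (Ht : 0 < t) by (unfold t; apply Rdiv_lt_0_compat; nra).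
  unfold hnorm at 2. rewrite <- sqrt_mult_alt.
  2: { pose proof (Rdiv_in_unit al N Hal). nra. }
  apply sqrt_le_1_alt.
  rewrite hinner_subsub, hinner_scalr, hinner_scall, hinner_scalr, <- !hnorm_sq.
  pose proof (shifted_inner_ge al v) as Coer. rewrite hinner_sym in Coer.
  pose proof (HN v). pose proof (hnorm_ge0 v). pose proof (hnorm_ge0 (shifted al v)).
  assert (Hsq : hnorm (shifted al v) * hnorm (shifted al v) <= (N * hnorm v) * (N * hnorm v))
    by (apply Rmult_le_compat; lra).
  pose proof (Rmult_le_compat_l t _ _ (Rlt_le _ _ Ht) Coer).
  pose proof (Rmult_le_compat_l (t * t) _ _ (Rlt_le _ _ (Rmult_lt_0_compat _ _ Ht Ht)) Hsq).
  assert ((1 - (al / N) ^ 2) * (hnorm v * hnorm v) =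
    hnorm v * hnorm v - 2 * (t * (al * (hnorm v * hnorm v)))
    + t * t * (N * hnorm v * (N * hnorm v))) by (unfold t; field; lra).
  nra.
Qed.

Lemma shifted_surjective al b : 0 < al -> exists z, shifted al z = b.
Proof.
  intros Hal. destruct (shifted_bounded al Hal) as [N [HalN HN]].
  set (t := al / (N * N)).
  assert (Ht : t <> 0) by (unfold t; apply Rgt_not_eq, Rdiv_lt_0_compat; nra).
  (* damped Richardson iteration; [t = al / N^2] makes it a contraction *)
  set (T z := hsub z (hscal t (hsub (shifted al z) b))).
  destruct (contraction_fixpoint T (sqrt (1 - (al / N) ^ 2))) as [z Hz].
  - pose proof (Rdiv_in_unit al N (conj Hal HalN)).
    split; [apply sqrt_pos|]. rewrite <- sqrt_1 at 2. apply sqrt_lt_1_alt. simpl. nra.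
  - intros u v. unfold T.
    rewrite hsubBB, <- hscal_sub, hsubBB, hsubrr, hsub0, <- shifted_sub.
    apply shifted_damped_step; [lra | exact HN].
  - exists z. apply hsub_eq0, (hscal_eq0 t); [exact Ht|].
    exact (hsub_eq_self _ _ Hz).
Qed.

Lemma resolvent_spec al b : 0 < al -> shifted al (resolvent A al b) = b.
Proof.
  intros Hal. unfold resolvent.
  apply (epsilon_spec (inhabits hzero) (fun z => shifted al z = b)).
  apply shifted_surjective, Hal.
Qed.

Lemma scaled_resolvent_le al b w : 0 < al ->
  al * hnorm (resolvent A al b) <= hnorm (hsub b (A w)) + 2 * al * hnorm w.
Proof.
  intros Hal. set (z := resolvent A al b). set (u := resolvent A al w).
  assert (Hz : shifted al z = b) by apply resolvent_spec, Hal.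
  assert (Hu : shifted al u = w) by apply resolvent_spec, Hal.
  assert (Near : al * hnorm (hsub z (A u)) <= hnorm (hsub b (A w))).
  { rewrite <- Hz, <- Hu, <- shifted_A, <- shifted_sub. apply shifted_coercive, Hal. }
  assert (Au : al * hnorm (A u) <= 2 * al * hnorm w).
  { assert (E : A u = hsub w (hscal al u)) by (rewrite <- Hu; symmetry; apply haddK).
    pose proof (shifted_coercive al u Hal) as Cu. rewrite Hu in Cu.
    pose proof (hnorm_sub_le w (hscal al u)) as Tri.
    rewrite <- E, hnorm_scal, Rabs_pos_eq in Tri by lra.
    pose proof (Rmult_le_compat_l al _ _ (Rlt_le _ _ Hal) Tri). nra. }
  pose proof (Rmult_le_compat_l al _ _ (Rlt_le _ _ Hal) (hnorm_le_sub z (A u))). lra.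
Qed.

Lemma lavrentiev_error_le xdag xbar yd al : 0 < al ->
  hnorm (hsub (lavrentiev A xbar yd al) xdag) <=
    hnorm (hsub (A xdag) yd) / al + bias A xdag xbar al.
Proof.
  intros Hal. unfold bias, lavrentiev.
  set (x := resolvent A al (hadd yd (hscal al xbar))).
  set (z := resolvent A al (hsub xdag xbar)).
  assert (Hx : shifted al x = hadd yd (hscal al xbar)) by apply resolvent_spec, Hal.
  assert (Hz : shifted al z = hsub xdag xbar) by apply resolvent_spec, Hal.
  set (e := hadd (hsub x xdag) (hscal al z)).
  assert (Noise : shifted al e = hsub yd (A xdag)).
  { unfold e. rewrite shifted_add, shifted_sub, shifted_scal, Hx, Hz.
    unfold shifted at 1. rewrite hsubDD, hscal_sub, <- hadd_assoc, <- hsub_trans, hsubrr.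
    apply hadd0. }
  assert (He : al * hnorm e <= hnorm (hsub (A xdag) yd)).
  { rewrite hnorm_subC, <- Noise. apply shifted_coercive, Hal. }
  replace (hsub x xdag) with (hsub e (hscal al z)) by apply haddK.
  eapply Rle_trans; [apply hnorm_sub_le|].
  rewrite hnorm_scal, Rabs_pos_eq by lra.
  apply Rplus_le_compat_r. apply Rmult_le_reg_l with al; [exact Hal|].
  replace (al * (hnorm (hsub (A xdag) yd) / al)) with (hnorm (hsub (A xdag) yd))
    by (field; lra).
  exact He.
Qed.

End ShiftedOperator.

Lemma exp_le_compat x y : x <= y -> exp x <= exp y.
Proof. intros [H|H]; [left; apply exp_increasing, H | right; rewrite H; reflexivity]. Qed.

Lemma exp_neg_ln_inv a : 0 < a -> exp (- ln (1 / a)) = a.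
Proof. intros Ha. unfold Rdiv. rewrite Rmult_1_l, ln_Rinv, Ropp_involutive by exact Ha. apply exp_ln, Ha. Qed.

Lemma ln_inv_large S : exists a0, 0 < a0 /\ forall a, 0 < a < a0 -> S < ln (1 / a).
Proof.
  exists (exp (- S)). split; [apply exp_pos|]. intros a [Ha Ha0].
  rewrite <- (exp_neg_ln_inv a Ha) in Ha0. apply exp_lt_inv in Ha0. lra.
Qed.

Lemma Rpower_neg_antitone q a b : 0 <= q -> 0 < a <= b -> Rpower b (- q) <= Rpower a (- q).
Proof.
  intros Hq Hab. rewrite !Rpower_Ropp. apply Rinv_le_contravar; [apply exp_pos|].
  apply Rle_Rpower_l; assumption.
Qed.

Lemma exp_neg_le_Rpower_neg p q : 0 < p -> 0 < q ->
  exists C, 0 < C /\ forall t, 0 < t -> exp (- (p * t)) <= C * Rpower t (- q).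
Proof.
  intros Hp Hq. exists (exp (- q - q * ln (p / q))). split; [apply exp_pos|].
  intros t Ht. unfold Rpower. rewrite <- exp_plus. apply exp_le_compat.
  assert (Hpq : 0 < p / q) by (apply Rdiv_lt_0_compat; assumption).
  (* [ln s <= s - 1] at [s = p t / q] *)
  pose proof (exp_ineq1_le (ln (p / q * t))) as Hln.
  rewrite exp_ln in Hln by (apply Rmult_lt_0_compat; assumption).
  rewrite ln_mult in Hln by assumption.
  assert (Scaled : q * (ln (p / q) + ln t) <= q * (p / q * t - 1))
    by (apply Rmult_le_compat_l; lra).
  replace (q * (p / q * t - 1)) with (p * t - q) in Scaled by (field; lra).
  lra.
Qed.

Lemma log_rate_of_tradeoff (f : R -> R) K q Rlow : 0 <= K -> 0 < q -> 1 < Rlow ->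
  (forall a Rr, 0 < a -> Rlow <= Rr -> f a <= K / Rpower (ln Rr) q + 2 * a * Rr) ->
  exists C a0, 0 < C /\ 0 < a0 /\
    forall a, 0 < a < a0 -> f a <= C * Rpower (ln (1 / a)) (- q).
Proof.
  intros HK Hq HRlow Hf.
  destruct (exp_neg_le_Rpower_neg (1 / 2) q) as [C1 [HC1 Hexp]]; [lra|exact Hq|].
  destruct (ln_inv_large (2 * ln Rlow)) as [a0 [Ha0 Hsmall]].
  exists (K * Rpower 2 q + 2 * C1), a0.
  split; [pose proof (exp_pos (q * ln 2)); unfold Rpower; nra|].
  split; [exact Ha0|].
  intros a Ha. set (t := ln (1 / a)).
  assert (Ht : 2 * ln Rlow < t) by (apply Hsmall, Ha).
  assert (HlnR : 0 < ln Rlow) by (rewrite <- ln_1; apply ln_increasing; lra).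
  (* the radius [Rr = a^(-1/2)] balances the two terms *)
  assert (HR : Rlow <= exp (t / 2)).
  { rewrite <- (exp_ln Rlow) by lra. apply exp_le_compat. lra. }
  eapply Rle_trans; [apply (Hf a _ (proj1 Ha) HR)|].
  rewrite ln_exp.
  assert (Approx : K / Rpower (t / 2) q = K * Rpower 2 q * Rpower t (- q)).
  { unfold Rpower, Rdiv. rewrite ln_mult, ln_Rinv by lra.
    rewrite <- exp_Ropp, Rmult_assoc, <- exp_plus. do 2 f_equal. ring. }
  assert (Penalty : 2 * a * exp (t / 2) = 2 * exp (- (1 / 2 * t))).
  { rewrite <- (exp_neg_ln_inv a) at 1 by lra. fold t.
    rewrite Rmult_assoc, <- exp_plus. do 2 f_equal. field. }
  rewrite Approx, Penalty. specialize (Hexp t ltac:(lra)). lra.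
Qed.

Lemma parameter_choice_exp c zeta delta : 0 < c -> 0 < delta ->
  c * Rpower delta zeta = exp (ln c - zeta * ln (1 / delta)).
Proof.
  intros Hc Hd. unfold Rpower. rewrite <- (exp_ln c) at 1 by exact Hc. rewrite <- exp_plus.
  f_equal. unfold Rdiv. rewrite Rmult_1_l, ln_Rinv by exact Hd. ring.
Qed.

Lemma noise_over_parameter c zeta s : 0 < c ->
  exp (- s) / exp (ln c - zeta * s) = / c * exp (- ((1 - zeta) * s)).
Proof.
  intros Hc. unfold Rdiv. rewrite <- (exp_ln c) at 2 by exact Hc.
  rewrite <- !exp_Ropp, <- !exp_plus. f_equal. ring.
Qed.

Lemma log_rate_of_parameter_choice (f : R -> R) C q c zeta a0 :
  0 <= C -> 0 < q -> 0 < c -> 0 < zeta < 1 -> 0 < a0 ->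
  (forall a, 0 < a < a0 -> f a <= C * Rpower (ln (1 / a)) (- q)) ->
  exists C' d0, 0 < d0 /\ forall delta, 0 < delta < d0 ->
    delta / (c * Rpower delta zeta) + f (c * Rpower delta zeta)
      <= C' * Rpower (ln (1 / delta)) (- q).
Proof.
  intros HC Hq Hc Hz Ha0 Hf.
  destruct (exp_neg_le_Rpower_neg (1 - zeta) q) as [C2 [HC2 Hexp]]; [lra|exact Hq|].
  destruct (ln_inv_large (Rmax 0 (Rmax ((ln c - ln a0) / zeta) (2 * ln c / zeta))))
    as [d0 [Hd0 Hsmall]].
  exists (C2 / c + C * Rpower (zeta / 2) (- q)), d0. split; [exact Hd0|].
  intros delta Hdelta. set (s := ln (1 / delta)).
  pose proof (Hsmall delta Hdelta) as Hs. fold s in Hs.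
  apply Rmax_Rlt in Hs as [Hs0 Hs]. apply Rmax_Rlt in Hs as [Hs1 Hs2].
  assert (Hsa0 : ln c - ln a0 < zeta * s).
  { replace (ln c - ln a0) with (zeta * ((ln c - ln a0) / zeta)) by (field; lra).
    apply Rmult_lt_compat_l; lra. }
  assert (Hsc : 2 * ln c < zeta * s).
  { replace (2 * ln c) with (zeta * (2 * ln c / zeta)) by (field; lra).
    apply Rmult_lt_compat_l; lra. }
  rewrite parameter_choice_exp by lra. fold s. set (a := exp (ln c - zeta * s)).
  assert (Ha : 0 < a < a0).
  { split; [apply exp_pos|]. unfold a. rewrite <- (exp_ln a0) by exact Ha0.
    apply exp_increasing. lra. }
  assert (Noise : delta / a <= / c * (C2 * Rpower s (- q))).
  { rewrite <- (exp_neg_ln_inv delta) at 1 by lra. fold s. unfold a.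
    rewrite noise_over_parameter by exact Hc.
    apply Rmult_le_compat_l; [apply Rlt_le, Rinv_0_lt_compat, Hc|]. apply Hexp. lra. }
  assert (Bias : f a <= C * Rpower (zeta / 2) (- q) * Rpower s (- q)).
  { eapply Rle_trans; [apply Hf, Ha|]. rewrite Rmult_assoc. apply Rmult_le_compat_l; [exact HC|].
    rewrite Rpower_mult_distr by lra. apply Rpower_neg_antitone; [lra|].
    unfold a, Rdiv. rewrite Rmult_1_l, ln_Rinv, ln_exp by apply exp_pos. nra. }
  replace ((C2 / c + C * Rpower (zeta / 2) (- q)) * Rpower s (- q))
    with (/ c * (C2 * Rpower s (- q)) + C * Rpower (zeta / 2) (- q) * Rpower s (- q))
    by (field; lra).
  lra.
Qed.

Theorem mainTheorem13 (X : RHilbert) (A : X -> X) (xdag xbar : X)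
  (HA : bounded_linear A) (Hmon : monotone A)
  (K q Rlow : R) (HK : 0 < K) (Hq : 0 < q) (HRlow : 1 < Rlow)
  (Hd : forall Rr, Rlow <= Rr ->
     exists w : X, hnorm w <= Rr /\
       hnorm (hsub (hsub xdag xbar) (A w)) <= K / Rpower (ln Rr) q) :
  (exists C a0, 0 < a0 /\ forall alpha, 0 < alpha < a0 ->
      bias A xdag xbar alpha <= C * Rpower (ln (1 / alpha)) (- q)) /\
  (forall c zeta, 0 < c -> 0 < zeta < 1 ->
     exists C d0, 0 < d0 /\ forall delta (ydelta : X), 0 < delta < d0 ->
       hnorm (hsub (A xdag) ydelta) <= delta ->
       hnorm (hsub (lavrentiev A xbar ydelta (c * Rpower delta zeta)) xdag)
         <= C * Rpower (ln (1 / delta)) (- q)).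
Proof.
  destruct (log_rate_of_tradeoff (bias A xdag xbar) K q Rlow) as (C & a0 & HC & Ha0 & Hbias);
    [lra | exact Hq | exact HRlow | |].
  { intros a Rr Ha HR. destruct (Hd Rr HR) as [w [Hw Hdw]].
    eapply Rle_trans; [apply (scaled_resolvent_le A HA Hmon a _ w Ha)|].
    pose proof (Rmult_le_compat_l (2 * a) _ _ ltac:(lra) Hw). lra. }
  split; [exists C, a0; split; assumption|].
  intros c zeta Hc Hz.
  destruct (log_rate_of_parameter_choice (bias A xdag xbar) C q c zeta a0)
    as (C' & d0 & Hd0 & Hrate); [lra | exact Hq | exact Hc | exact Hz | exact Ha0 | exact Hbias |].
  exists C', d0. split; [exact Hd0|]. intros delta yd Hdelta Hy.
  assert (Ha : 0 < c * Rpower delta zeta) by (apply Rmult_lt_0_compat; [exact Hc | apply exp_pos]).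
  eapply Rle_trans; [apply (lavrentiev_error_le A HA Hmon), Ha|].
  eapply Rle_trans; [|apply (Hrate delta Hdelta)].
  apply Rplus_le_compat_r, Rmult_le_compat_r; [apply Rlt_le, Rinv_0_lt_compat, Ha | exact Hy].
Qed.
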